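(* Let $X\subset\mathbf{P}^n$ be a geometrically integral hypersurface of degree $d\ge2$ and let $H_0\subset\mathbf{P}^n$ be a hyperplane with $\Lambda(X)\cap H_0\neq\emptyset$. Let $\mathbf{P}^{n\vee}$ be the dual projective space and let $S_X\subset\mathbf{P}^{n\vee}$ be the set of hyperplanes $H$ with $\dim(\Lambda(X\cap H)\cap H_0)\ge\dim(\Lambda(X)\cap H_0)$. Then $S_X$ is a closed proper subset of $\mathbf{P}^{n\vee}$ defined by $O_{d,n}(1)$ homogeneous polynomials of degree $O_{d,n}(1)$.
   Context: For a hypersurface $Y$ of degree $d$ (in $\mathbf{P}^n$, or in a hyperplane $H\cong\mathbf{P}^{n-1}$), $\Lambda(Y)$ denotes the set of points of multiplicity $d$ on $Y$; it is a projective linear subspace. $X\cap H$ is regarded as a hypersurface of degree $d$ in $H$. The dimension of the empty set is $-1$. Implied constants depend only on $d$ and $n$. *)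

From HB Require Import structures.
From mathcomp Require Import all_boot all_order all_algebra.
From mathcomp Require Import mpoly.
From Stdlib Require Import ClassicalDescription.

Set Implicit Arguments.
Unset Strict Implicit.
Unset Printing Implicit Defensive.

Import Order.TTheory GRing.Theory.
Local Open Scope ring_scope.

Section ProjDefs.
Variables (K : fieldType) (n : nat).

(* Points of P^n are nonzero row vectors of K^(n+1) (up to scaling);
   F : {mpoly K[n.+1]} is a form in the coordinates x_0..x_n. *)
Definition coords (p : 'rV[K]_n.+1) : 'I_n.+1 -> K := fun i => p 0 i.

(* Linear form h (a nonzero row vector) defines the hyperplane
   {p | sum_i h_i p_i = 0}; it is also a point of the dual space. *)
Definition on_hyp (h p : 'rV[K]_n.+1) : Prop := p *m h^T = 0.

(* Given a point p of a linear subspace L of K^(n+1) whose (vector) space is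
   spanned by the rows of M : 'M_(r, n.+1), the polynomial
   z |-> F (p + z *m M) in r variables: Taylor expansion of F|_L at p. *)
Definition shift_poly (r : nat) (F : {mpoly K[n.+1]}) (p : 'rV[K]_n.+1)
    (M : 'M[K]_(r, n.+1)) : {mpoly K[r]} :=
  F \mPo [tuple ((p 0 i)%:MP + \sum_(j < r) M j i *: 'X_j) | i < n.+1].

(* The multiplicity at p of F restricted to L is >= m: all terms of degree
   < m of the Taylor expansion vanish. *)
Definition mult_ge (r : nat) (F : {mpoly K[n.+1]}) (p : 'rV[K]_n.+1)
    (M : 'M[K]_(r, n.+1)) (m : nat) : Prop :=
  forall mono : 'X_{1..r}, (mdeg mono < m)%N -> (shift_poly F p M)@_mono = 0.

(* Lambda(X) for X = V(F) of degree d in P^n: points of multiplicity d. *)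
Definition LambdaX (F : {mpoly K[n.+1]}) (d : nat) (p : 'rV[K]_n.+1) : Prop :=
  p != 0 /\ mult_ge F p (1%:M : 'M[K]_n.+1) d.

(* Lambda(X cap H) for H = {a . x = 0}: points of H where X cap H, viewed as
   a degree-d hypersurface in H, has multiplicity d.  The (vector space of)
   H is spanned by the rows of kermx a^T. *)
Definition LambdaXH (F : {mpoly K[n.+1]}) (d : nat) (a p : 'rV[K]_n.+1) : Prop :=
  p != 0 /\ on_hyp a p /\ mult_ge F p (kermx a^T) d.

(* Dimension of a projective linear subspace given as its set S of points
   (nonzero vectors): (max number of linearly independent vectors in S) - 1;
   the empty set has dimension -1. *)
Definition has_indep (S : 'rV[K]_n.+1 -> Prop) (r : nat) : Prop :=
  exists V : 'M[K]_(r, n.+1), row_free V /\ forall i, S (row i V).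

Definition has_indepb (S : 'rV[K]_n.+1 -> Prop) (r : nat) : bool :=
  if excluded_middle_informative (has_indep S r) then true else false.

Definition pdim (S : 'rV[K]_n.+1 -> Prop) : int :=
  ((\max_(r < n.+2 | has_indepb S r) r)%N)%:Z - 1.

Definition SX (F : {mpoly K[n.+1]}) (d : nat) (h0 a : 'rV[K]_n.+1) : Prop :=
  (pdim (fun p => LambdaX F d p /\ on_hyp h0 p)
     <= pdim (fun p => LambdaXH F d a p /\ on_hyp h0 p))%R.

End ProjDefs.

Definition irreducible_elt (R : idomainType) (F : R) : Prop :=
  F != 0 /\ F \isn't a GRing.unit /\
  forall g h : R, F = g * h -> g \is a GRing.unit \/ h \is a GRing.unit.

From HB Require Import structures.
From mathcomp Require Import all_boot all_order all_algebra.
From mathcomp Require Import mpoly.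
From mathcomp Require Import ring zify.
From Stdlib Require Import ClassicalDescription.

(* A point p lies in Lambda(X), X = V(F), iff F is invariant under translation by
   p, F (x + p) = F x: the Taylor expansion of the form F at p differs from F only
   in degrees < d.  Such invariance restricts to every hyperplane H through p.
   Conversely, if some w in Lambda(X) lies off H, invariance along H extends to the
   whole space: by homogeneity F is invariant along the line of w, hence factors
   through the projection onto H along w.  Therefore H lies in S_X iff
   Lambda(X) cap H0 is contained in H, since otherwise Lambda(X cap H) cap H0 lies
   in the hyperplane section Lambda(X) cap H0 cap H, of smaller dimension.  So S_X is cut out by the linear
   forms a |-> a . v_i for a basis (v_i) of Lambda(X) cap H0, and it is proper as
   Lambda(X) cap H0 is nonempty. *)

Set Implicit Arguments.
Unset Strict Implicit.
Unset Printing Implicit Defensive.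
Import GRing.Theory Num.Theory.
Local Open Scope ring_scope.

Lemma msizeM_le_pred (R : nzRingType) r (p q : {mpoly R[r]}) :
  (msize (p * q) <= (msize p + msize q).-1)%N.
Proof.
have [->|nz_p] := eqVneq p 0; first by rewrite mul0r msize0.
have [->|nz_q] := eqVneq q 0; first by rewrite mulr0 msize0.
have [->|nz_pq] := eqVneq (p * q) 0; first by rewrite msize0.
rewrite -!mlead_deg // addSn /= addnS ltnS.
by have /lemc_mdeg := mleadM_le p q; rewrite mdegD.
Qed.

Section LowerOrderPerturbation.
Variables (R : comNzRingType) (r : nat).
Implicit Types (a b A B : {mpoly R[r]}).

Lemma msize_subM a b A B (ka kb : nat) :
  (msize (a - b) <= ka)%N -> (msize b <= ka.+1)%N ->
  (msize (A - B) <= kb)%N -> (msize B <= kb.+1)%N ->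
  (msize (a * A - b * B) <= ka + kb)%N /\ (msize (b * B) <= (ka + kb).+1)%N.
Proof.
move=> dab db dAB dB.
have -> : a * A - b * B = (a - b) * (A - B) + ((a - b) * B + b * (A - B)).
  by ring.
have := msizeM_le_pred (a - b) (A - B); have := msizeM_le_pred (a - b) B.
have := msizeM_le_pred b (A - B); have := msizeM_le_pred b B.
move=> hbB hbAB habB habAB; split; last by lia.
apply: leq_trans (msizeD_le _ _) _; rewrite geq_max; apply/andP; split; first lia.
apply: leq_trans (msizeD_le _ _) _; rewrite geq_max; apply/andP; split; lia.
Qed.

Lemma msize_subXn a b k : (msize (a - b) <= 1)%N -> (msize b <= 2)%N ->
  (msize (a ^+ k - b ^+ k) <= k)%N /\ (msize (b ^+ k) <= k.+1)%N.
Proof.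
move=> dab db; elim: k => [|k [dk bk]]; first by rewrite !expr0 subrr msize0 msize1.
by rewrite !exprS; have := msize_subM dab db dk bk; rewrite add1n.
Qed.

Lemma msize_sub_prodXn (I : Type) (s : seq I) (e : I -> nat) (x y : I -> {mpoly R[r]}) :
  (forall i, msize (x i - y i) <= 1)%N -> (forall i, msize (y i) <= 2)%N ->
  (msize (\prod_(i <- s) x i ^+ e i - \prod_(i <- s) y i ^+ e i) <= \sum_(i <- s) e i)%N
  /\ (msize (\prod_(i <- s) y i ^+ e i) <= (\sum_(i <- s) e i).+1)%N.
Proof.
move=> dxy dy; elim: s => [|i s [ds ys]]; first by rewrite !big_nil subrr msize0 msize1.
rewrite !big_cons; have [di yi] := msize_subXn (e i) (dxy i) (dy i).
exact: msize_subM di yi ds ys.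
Qed.

Lemma dhomog_prodXn (I : Type) (s : seq I) (e : I -> nat) (y : I -> {mpoly R[r]}) :
  (forall i, y i \is 1.-homog) -> \prod_(i <- s) y i ^+ e i \is (\sum_(i <- s) e i).-homog.
Proof.
move=> hy; elim: s => [|i s ih]; first by rewrite !big_nil dhomog1.
rewrite !big_cons; apply: dhomogM ih.
by have := dhomogMn (e i) (hy i); rewrite mul1n.
Qed.

End LowerOrderPerturbation.

Section AffineSubstitution.
Variable R : comNzRingType.

Definition affine_subst (m r : nat) (c : 'rV[R]_m) (M : 'M[R]_(r, m)) :
    m.-tuple {mpoly R[r]} :=
  [tuple ((c 0 i)%:MP + \sum_(j < r) M j i *: 'X_j) | i < m].

Definition transl_invariant (m r : nat) (F : {mpoly R[m]}) (c : 'rV[R]_m)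
    (M : 'M[R]_(r, m)) : Prop :=
  F \mPo affine_subst c M = F \mPo affine_subst 0 M.

Lemma comp_mpolyA (m r s : nat) (p : {mpoly R[m]}) (lq : m.-tuple {mpoly R[r]})
    (ls : r.-tuple {mpoly R[s]}) :
  (p \mPo lq) \mPo ls = p \mPo [tuple tnth lq i \mPo ls | i < m].
Proof.
rewrite [p \mPo lq]comp_mpolyE [p \mPo _]comp_mpolyE raddf_sum /=.
apply: eq_bigr => mu _; rewrite comp_mpolyZ rmorph_prod /=; congr (_ *: _).
by apply: eq_bigr => i _; rewrite rmorphXn /= tnth_mktuple.
Qed.

Lemma comp_affine_subst (m r s : nat) (F : {mpoly R[m]}) (c : 'rV[R]_m)
    (M : 'M[R]_(r, m)) (c' : 'rV[R]_r) (N : 'M[R]_(s, r)) :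
  (F \mPo affine_subst c M) \mPo affine_subst c' N =
  F \mPo affine_subst (c + c' *m M) (N *m M).
Proof.
rewrite comp_mpolyA; congr (_ \mPo _); apply: eq_from_tnth => i; rewrite !tnth_mktuple.
rewrite comp_mpolyD comp_mpolyC raddf_sum /= !mxE (raddfD (@mpolyC _ R)) /= -addrA.
congr (_ + _).
under eq_bigr => j _ do rewrite comp_mpolyZ comp_mpolyXU -tnth_nth tnth_mktuple.
under [X in _ = _ + X]eq_bigr => k _ do rewrite mxE scaler_suml.
rewrite exchange_big /= raddf_sum /= -big_split /=; apply: eq_bigr => j _.
rewrite scalerDr scaler_sumr; congr (_ + _); first by rewrite -mul_mpolyC -rmorphM mulrC.
by apply: eq_bigr => k _; rewrite scalerA mulrC.
Qed.

Lemma sum_delta_mpolyX m (i : 'I_m) :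
  \sum_(j < m) (1%:M : 'M[R]_m) j i *: ('X_j : {mpoly R[m]}) = 'X_i.
Proof.
rewrite (bigD1 i) //= mxE eqxx scale1r big1 ?addr0 // => j ji.
by rewrite mxE (negbTE ji) scale0r.
Qed.

Lemma comp_affine_subst_id m (F : {mpoly R[m]}) : F \mPo affine_subst 0 1%:M = F.
Proof.
rewrite -[RHS]comp_mpoly_id; congr (_ \mPo _); apply: eq_from_tnth => i.
by rewrite !tnth_mktuple mxE mpolyC0 add0r sum_delta_mpolyX.
Qed.

Lemma transl_invariant_restr m r (F : {mpoly R[m]}) (c : 'rV[R]_m) (M : 'M[R]_(r, m)) :
  transl_invariant F c 1%:M -> transl_invariant F c M.
Proof.
have through_id c' : F \mPo affine_subst c' M = (F \mPo affine_subst c' 1%:M) \mPo affine_subst 0 M.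
  by rewrite comp_affine_subst mul0mx addr0 mulmx1.
by rewrite /transl_invariant !through_id => ->.
Qed.

Section LinearPart.
Variables (m r : nat) (M : 'M[R]_(r, m)).

Lemma linear_subst_homog i : tnth (affine_subst 0 M) i \is 1.-homog.
Proof.
rewrite tnth_mktuple mxE mpolyC0 add0r; apply: rpred_sum => j _.
by apply: dhomogZ; rewrite dhomogX; apply/eqP; apply: mdeg1.
Qed.

Lemma linear_subst_msize i : (msize (tnth (affine_subst 0 M) i) <= 2)%N.
Proof.
rewrite tnth_mktuple mxE mpolyC0 add0r; apply: leq_trans (msize_sum _ _ _) _.
apply/bigmax_leqP => j _; apply: leq_trans (msizeZ_le _ _) _.
by rewrite msizeX mdeg1.
Qed.

Lemma msize_sub_affine_subst (c : 'rV[R]_m) i :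
  (msize (tnth (affine_subst c M) i - tnth (affine_subst 0 M) i) <= 1)%N.
Proof. by rewrite !tnth_mktuple mxE mpolyC0 add0r addrK msizeC; case: (_ != 0). Qed.

Lemma comp_linear_subst_homog d (F : {mpoly R[m]}) :
  F \is d.-homog -> F \mPo affine_subst 0 M \is d.-homog.
Proof.
move=> Fd; rewrite comp_mpolyE big_seq; apply: rpred_sum => mu mu_F; apply: dhomogZ.
rewrite -(dhomog_mf Fd mu_F) /= mdegE.
exact: dhomog_prodXn linear_subst_homog.
Qed.

(* Only the terms of degree [< d] of the Taylor expansion of [F] depend on the base point. *)
Lemma msize_sub_comp_affine_subst d (F : {mpoly R[m]}) (c : 'rV[R]_m) :
  F \is d.-homog ->
  (msize ((F \mPo affine_subst c M) - (F \mPo affine_subst 0 M)) <= d)%N.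
Proof.
move=> Fd; rewrite !comp_mpolyE -sumrN -big_split /= big_seq.
apply: leq_trans (msize_sum _ _ _) _; apply/bigmax_leqP_seq => mu _ mu_F.
rewrite -scalerN -scalerDr; apply: leq_trans (msizeZ_le _ _) _.
rewrite -(dhomog_mf Fd mu_F) /= mdegE.
by case: (msize_sub_prodXn (index_enum 'I_m) (fun i => mu i)
  (msize_sub_affine_subst c) linear_subst_msize).
Qed.

Lemma transl_invariantP d (F : {mpoly R[m]}) (c : 'rV[R]_m) : F \is d.-homog ->
  (forall mu : 'X_{1..r}, (mdeg mu < d)%N -> (F \mPo affine_subst c M)@_mu = 0) <->
  transl_invariant F c M.
Proof.
move=> Fd; have FMd := comp_linear_subst_homog Fd.
split=> [low|-> mu mu_lt]; last by apply: (dhomog_nemf_coeff FMd); rewrite neq_ltn mu_lt.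
apply/eqP; rewrite -subr_eq0; apply/eqP/mpolyP => mu; rewrite mcoeff0 mcoeffB.
have [mu_lt|mu_ge] := ltnP (mdeg mu) d.
  by rewrite low // (dhomog_nemf_coeff FMd) ?subr0 // neq_ltn mu_lt.
rewrite -mcoeffB; apply/eqP; rewrite mcoeff_eq0; apply: msize_mdeg_ge.
exact: leq_trans (msize_sub_comp_affine_subst c Fd) mu_ge.
Qed.

End LinearPart.
End AffineSubstitution.

Section Dehomogenization.
Variables (R : comNzRingType) (m : nat).

(* Setting the last of [m + 1] variables to [1], resp. viewing a polynomial in
   [m] variables as one in [m + 1] variables. *)
Definition dehomog_subst : (m + 1).-tuple {mpoly R[m]} :=
  affine_subst (row_mx 0 1%:M : 'rV[R]_(m + 1)) (row_mx 1%:M 0 : 'M[R]_(m, m + 1)).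
Definition embed_subst : m.-tuple {mpoly R[m + 1]} :=
  affine_subst 0 (col_mx 1%:M 0 : 'M[R]_(m + 1, m)).

Definition mnm_init (mu : 'X_{1..m + 1}) : 'X_{1..m} := [multinom mu (lshift 1 i) | i < m].
Definition mnm_last (mu : 'X_{1..m + 1}) : nat := mu (rshift m ord0).
Definition mnm_ext (nu : 'X_{1..m}) : 'X_{1..m + 1} :=
  [multinom (match split j with inl i => nu i | inr _ => 0%N end) | j < m + 1].

Lemma mdeg_split mu : mdeg mu = (mdeg (mnm_init mu) + mnm_last mu)%N.
Proof.
rewrite !mdegE big_split_ord /= big_ord1; congr (_ + _)%N.
by apply: eq_bigr => i _; rewrite mnmE.
Qed.

Lemma mnm_initK : cancel mnm_ext mnm_init.
Proof. by move=> nu; apply/mnmP => i; rewrite !mnmE (unsplitK (inl _ _ : 'I_m + 'I_1)). Qed.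

Lemma mnm_last_ext nu : mnm_last (mnm_ext nu) = 0%N.
Proof. by rewrite /mnm_last mnmE (unsplitK (inr _ _ : 'I_m + 'I_1)). Qed.

Lemma mnm_split_inj mu1 mu2 :
  mnm_init mu1 = mnm_init mu2 -> mnm_last mu1 = mnm_last mu2 -> mu1 = mu2.
Proof.
move=> e_init e_last; apply/mnmP => j; rewrite -(splitK j).
case: (split j) => [i|k] /=; last by rewrite (ord1 k).
by have := congr1 (fun nu : 'X_{1..m} => nu i) e_init; rewrite !mnmE.
Qed.

Lemma tnth_dehomog_subst_init i : tnth dehomog_subst (lshift 1 i) = 'X_i.
Proof.
rewrite tnth_mktuple row_mxEl mxE mpolyC0 add0r -(sum_delta_mpolyX R i).
by apply: eq_bigr => j _; rewrite row_mxEl.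
Qed.

Lemma tnth_dehomog_subst_last k : tnth dehomog_subst (rshift m k) = 1.
Proof.
rewrite tnth_mktuple row_mxEr (ord1 k) mxE eqxx big1 ?addr0 // => j _.
by rewrite row_mxEr mxE scale0r.
Qed.

Lemma tnth_embed_subst i : tnth embed_subst i = 'X_(lshift 1 i).
Proof.
rewrite tnth_mktuple mxE mpolyC0 add0r big_split_ord /= big_ord1 col_mxEd mxE scale0r addr0.
rewrite (bigD1 i) //= col_mxEu mxE eqxx scale1r big1 ?addr0 // => j ji.
by rewrite col_mxEu mxE (negbTE ji) scale0r.
Qed.

Lemma comp_dehomog_subst (H : {mpoly R[m + 1]}) :
  H \mPo dehomog_subst = \sum_(mu <- msupp H) H@_mu *: 'X_[mnm_init mu].
Proof.
rewrite comp_mpolyE; apply: eq_bigr => mu _; congr (_ *: _).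
rewrite big_split_ord /= big_ord1 tnth_dehomog_subst_last expr1n mulr1 mpolyXE_id.
by apply: eq_bigr => i _; rewrite tnth_dehomog_subst_init mnmE.
Qed.

Lemma comp_embed_subst (F : {mpoly R[m]}) :
  F \mPo embed_subst = \sum_(nu <- msupp F) F@_nu *: 'X_[mnm_ext nu].
Proof.
rewrite comp_mpolyE; apply: eq_bigr => nu _; congr (_ *: _).
rewrite mpolyXE_id big_split_ord /= big_ord1 mnmE.
rewrite (unsplitK (inr _ _ : 'I_m + 'I_1)) expr0 mulr1.
by apply: eq_bigr => i _; rewrite tnth_embed_subst mnmE (unsplitK (inl _ _ : 'I_m + 'I_1)).
Qed.

Lemma mcoeff_sumX k k' (p : {mpoly R[k]}) (f : 'X_{1..k} -> 'X_{1..k'}) mu :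
  (\sum_(nu <- msupp p) p@_nu *: 'X_[f nu])@_mu =
  \sum_(nu <- msupp p) p@_nu * (f nu == mu)%:R.
Proof. by rewrite raddf_sum /=; apply: eq_bigr => nu _; rewrite mcoeffZ mcoeffX. Qed.

Lemma dhomog_dehomogK d (H : {mpoly R[m + 1]}) (F : {mpoly R[m]}) :
  H \is d.-homog -> F \is d.-homog -> H \mPo dehomog_subst = F -> H = F \mPo embed_subst.
Proof.
move=> Hd Fd HF.
have F_coef nu : F@_nu = \sum_(mu <- msupp H) H@_mu * (mnm_init mu == nu)%:R.
  by rewrite -HF comp_dehomog_subst mcoeff_sumX.
have H_deg mu : mu \in msupp H -> mdeg mu = d by move/(dhomog_mf Hd).
have F_coef_init mu : mu \in msupp H -> F@_(mnm_init mu) = H@_mu.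
  move=> mu_H; rewrite F_coef (bigD1_seq mu) //= ?msupp_uniq // eqxx mulr1.
  rewrite big_seq_cond big1 ?addr0 // => mu' /andP [mu'_H mu'_mu].
  case: eqP => [e|]; last by rewrite mulr0.
  have e_last : mnm_last mu' = mnm_last mu.
    by have := H_deg _ mu_H; have := H_deg _ mu'_H; rewrite !mdeg_split e; lia.
  by rewrite (mnm_split_inj e e_last) eqxx in mu'_mu.
have H_last mu : mu \in msupp H -> mnm_last mu = 0%N.
  move=> mu_H; case: (posnP (mnm_last mu)) => // last_gt0; exfalso.
  have : F@_(mnm_init mu) = 0.
    apply: (dhomog_nemf_coeff Fd) => /=; have := H_deg _ mu_H; rewrite mdeg_split.
    by move: last_gt0; lia.
  by rewrite F_coef_init // => /eqP; rewrite mcoeff_eq0 mu_H.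
apply/mpolyP => mu; rewrite comp_embed_subst mcoeff_sumX.
have [last0|last_neq0] := eqVneq (mnm_last mu) 0%N; last first.
  rewrite big1 => [|nu _]; last first.
    by case: eqP => [e|]; [rewrite -e mnm_last_ext eqxx in last_neq0 | rewrite mulr0].
  by apply/eqP; rewrite mcoeff_eq0; apply: contra last_neq0 => /H_last ->.
have mu_ext : mu = mnm_ext (mnm_init mu).
  by apply: mnm_split_inj; rewrite ?mnm_initK ?mnm_last_ext.
rewrite [in RHS]mu_ext.
under eq_bigr => nu _ do rewrite (inj_eq (can_inj mnm_initK)).
rewrite -(mcoeff_sumX F id) -mpolyE.
have [mu_H|mu_H] := boolP (mu \in msupp H); first by rewrite F_coef_init.
have -> : H@_mu = 0 by apply/eqP; rewrite mcoeff_eq0.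
rewrite F_coef big_seq big1 // => mu' mu'_H; case: eqP => [e|]; last by rewrite mulr0.
have mu'_mu : mu' = mu by apply: mnm_split_inj => //; rewrite H_last // last0.
by move: mu_H; rewrite -mu'_mu mu'_H.
Qed.

End Dehomogenization.

Lemma transl_invariant_extend (K : fieldType) m d (F : {mpoly K[m]}) (a w v : 'rV[K]_m) :
  F \is d.-homog -> transl_invariant F w 1%:M -> (w *m a^T) 0 0 != 0 ->
  transl_invariant F v (kermx a^T) -> transl_invariant F v 1%:M.
Proof.
move=> Fd Fw wa_neq0 Fv; set M := kermx a^T.
set l : 'M[K]_(m, 1) := ((w *m a^T) 0 0)^-1 *: a^T.
(* [x |-> x *m P] is the projection onto the hyperplane [x *m a^T = 0] along [w]. *)
set P : 'M[K]_m := 1%:M - l *m w.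
have PM : (P <= M)%MS.
  apply/sub_kermxP; rewrite mulmxBl mul1mx -mulmxA [w *m a^T]mx11_scalar.
  by rewrite mul_mx_scalar scalerA mulfV // scale1r subrr.
have Pl : P + l *m w = 1%:M by rewrite subrK.
(* [Phi (y, t) = F (y + t w)] is a form whose dehomogenization [F (y + w)] is
   [F y], so [Phi] does not depend on [t]: [F] is invariant along the line of [w]. *)
set Phi := F \mPo affine_subst 0 (col_mx 1%:M w).
have PhiE : Phi = F \mPo embed_subst K m.
  apply: dhomog_dehomogK (comp_linear_subst_homog _ Fd) Fd _.
  rewrite comp_affine_subst !mul_row_col mul0mx !mul1mx mul0mx !add0r addr0.
  by rewrite Fw comp_affine_subst_id.
have Phi_proj c : Phi \mPo affine_subst (row_mx c 0) (row_mx P l) =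
    F \mPo affine_subst c 1%:M.
  by rewrite /Phi comp_affine_subst !mul_row_col !mulmx1 !mul0mx add0r addr0 Pl.
have Phi_proj' c : Phi \mPo affine_subst (row_mx c 0) (row_mx P l) =
    F \mPo affine_subst c P.
  by rewrite PhiE /embed_subst comp_affine_subst !mul_row_col !mulmx1 !mulmx0 !addr0 add0r.
have FP c : F \mPo affine_subst c P =
    (F \mPo affine_subst c M) \mPo affine_subst 0 (P *m pinvmx M).
  by rewrite comp_affine_subst mul0mx addr0 mulmxKpV.
by rewrite /transl_invariant -Phi_proj -(Phi_proj 0) !Phi_proj' !FP Fv.
Qed.

Lemma row_free_col_mx (K : fieldType) r m (V : 'M[K]_(r, m)) (u : 'rV[K]_m) :
  row_free V -> ~~ (u <= V)%MS -> row_free (col_mx V u).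
Proof.
move=> /eqP V_free u_notin; rewrite /row_free eqn_leq rank_leq_row /=.
have V_lt : (V < col_mx V u)%MS.
  by rewrite ltmxE -addsmxE addsmxSl col_mx_sub submx_refl.
by have := rank_ltmx V_lt; rewrite V_free; apply: leq_trans; rewrite addn1.
Qed.

Section ProjectiveDimension.
Variables (K : fieldType) (n : nat).
Implicit Types (S : 'rV[K]_n.+1 -> Prop).

Definition indep_max S : nat := (\max_(r < n.+2 | has_indepb S r) r)%N.

Lemma pdimE S : pdim S = (indep_max S)%:Z - 1.
Proof. by []. Qed.

Lemma has_indepbP S r : reflect (has_indep S r) (has_indepb S r).
Proof. by rewrite /has_indepb; case: excluded_middle_informative => h; constructor. Qed.

Lemma has_indep_leq S r : has_indep S r -> (r <= n.+1)%N.
Proof. by case=> V [/eqP V_free _]; rewrite -V_free rank_leq_col. Qed.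

Lemma leq_indep_max S r : has_indep S r -> (r <= indep_max S)%N.
Proof.
move=> S_r; have r_lt : (r < n.+2)%N by rewrite ltnS; apply: has_indep_leq S_r.
by apply: (@leq_bigmax_cond _ _ _ (Ordinal r_lt)); apply/has_indepbP.
Qed.

Lemma indep_max_has_indep S : has_indep S (indep_max S).
Proof.
have S_0 : has_indep S 0 by exists 0; split => [|[]//]; rewrite /row_free mxrank0.
have S_gt0 : (0 < #|(fun i : 'I_n.+2 => has_indepb S i)|)%N.
  by apply/card_gt0P; exists ord0; apply/has_indepbP.
have [r S_r r_max] := eq_bigmax_cond (fun i : 'I_n.+2 => nat_of_ord i) S_gt0.
by rewrite /indep_max r_max; apply/has_indepbP.
Qed.

Lemma has_indep_col_mx S r (V : 'M[K]_(r, n.+1)) (p : 'rV[K]_n.+1) :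
  row_free V -> (forall i, S (row i V)) -> S p -> ~~ (p <= V)%MS -> has_indep S (r + 1).
Proof.
move=> V_free V_S p_S p_notin; exists (col_mx V p); split; first exact: row_free_col_mx.
by move=> i; rewrite -(splitK i); case: split => j /=; rewrite ?rowKu ?rowKd ?row_id.
Qed.

Lemma indep_max_basis S : exists V : 'M[K]_(indep_max S, n.+1),
  [/\ row_free V, forall i, S (row i V) & forall p, S p -> (p <= V)%MS].
Proof.
have [V [V_free V_S]] := indep_max_has_indep S; exists V; split=> // p p_S.
apply: contraT => p_notin.
by have := leq_indep_max (has_indep_col_mx V_free V_S p_S p_notin); rewrite addn1 ltnn.
Qed.

Lemma pdim_le S T : (forall p, S p -> T p) -> pdim S <= pdim T.
Proof.
move=> ST; rewrite !pdimE lerD2r lez_nat; apply: leq_indep_max.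
by have [V [V_free V_S]] := indep_max_has_indep S; exists V; split=> // i; apply: ST.
Qed.

End ProjectiveDimension.

Lemma exists_not_on_hyp (K : fieldType) n (p : 'rV[K]_n.+1) :
  p != 0 -> exists a : 'rV[K]_n.+1, a != 0 /\ ~ on_hyp a p.
Proof.
move=> p_neq0; have [j pj_neq0] : exists j, p 0 j != 0.
  apply/existsP; apply: contraR p_neq0 => /existsPn p0.
  by apply/eqP/rowP => j; rewrite mxE; apply/eqP; rewrite -[_ == _]negbK p0.
exists (delta_mx 0 j); split.
  by apply/eqP => /matrixP /(_ 0 j); rewrite !mxE !eqxx => /eqP; rewrite oner_eq0.
move=> /matrixP /(_ 0 0); rewrite !mxE (bigD1 j) //= !mxE !eqxx mulr1 big1 ?addr0.
  by move/eqP; rewrite (negbTE pj_neq0).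
by move=> k kj; rewrite !mxE eqxx /= (negbTE kj) mulr0.
Qed.

Section Lambda.
Variables (K : fieldType) (n d : nat) (F : {mpoly K[n.+1]}).
Hypothesis F_homog : F \is d.-homog.

Lemma mult_ge_homogP r (p : 'rV[K]_n.+1) (M : 'M[K]_(r, n.+1)) :
  mult_ge F p M d <-> transl_invariant F p M.
Proof. exact: transl_invariantP. Qed.

Lemma LambdaX_LambdaXH (a p : 'rV[K]_n.+1) :
  LambdaX F d p -> on_hyp a p -> LambdaXH F d a p.
Proof.
case=> p_neq0 /mult_ge_homogP p_inv p_a; do 2!split=> //.
exact/mult_ge_homogP/transl_invariant_restr.
Qed.

Lemma LambdaXH_LambdaX (a w v : 'rV[K]_n.+1) :
  LambdaX F d w -> ~ on_hyp a w -> LambdaXH F d a v -> LambdaX F d v.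
Proof.
case=> _ /mult_ge_homogP w_inv w_a [v_neq0 [_ /mult_ge_homogP v_inv]]; split=> //.
apply/mult_ge_homogP/(transl_invariant_extend F_homog w_inv _ v_inv).
by apply: contra_not_neq w_a => wa0; rewrite /on_hyp [w *m a^T]mx11_scalar wa0 raddf0.
Qed.

Lemma SX_iff_sub_hyp (h0 a : 'rV[K]_n.+1) :
  SX F d h0 a <-> (forall p, LambdaX F d p /\ on_hyp h0 p -> on_hyp a p).
Proof.
split=> [SXa p [p_X p_h0]|sub_a]; last first.
  by apply: pdim_le => p [p_X p_h0]; split=> //; apply: LambdaX_LambdaXH => //; apply: sub_a.
apply/eqP/contraT => p_a; move: SXa; rewrite /SX !pdimE lerD2r lez_nat.
set S0 := fun q => LambdaX F d q /\ on_hyp h0 q.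
set SH := fun q => LambdaXH F d a q /\ on_hyp h0 q.
move=> le_S0_SH; have [V [V_free V_SH _]] := indep_max_basis SH.
have V_a : (V <= kermx a^T)%MS.
  by apply/sub_kermxP/row_matrixP => i; rewrite row_mul row0; case: (V_SH i) => -[_ []].
have p_notin : ~~ (p <= V)%MS.
  by apply: contra p_a => /submx_trans /(_ V_a) /sub_kermxP ->.
have V_S0 i : S0 (row i V).
  by case: (V_SH i) => V_H V_h0; split=> //; apply: LambdaXH_LambdaX p_X (elimN eqP p_a) V_H.
have := leq_indep_max (has_indep_col_mx (S := S0) V_free V_S0 (conj p_X p_h0) p_notin).
by lia.
Qed.

End Lambda.

Section LinearForm.
Variables (K : fieldType) (n : nat).

Definition linear_form (u : 'rV[K]_n.+1) : {mpoly K[n.+1]} := \sum_(j < n.+1) u 0 j *: 'X_j.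

Lemma linear_form_homog u : linear_form u \is 1.-homog.
Proof. by apply: rpred_sum => j _; apply: dhomogZ; rewrite dhomogX; apply/eqP; apply: mdeg1. Qed.

Lemma meval_linear_form u (a : 'rV[K]_n.+1) : (linear_form u).@[coords a] = (u *m a^T) 0 0.
Proof.
rewrite raddf_sum /= mxE; apply: eq_bigr => j _.
by rewrite mevalZ mevalXU /coords mxE.
Qed.

End LinearForm.

Theorem lemma8 (d n : nat) : (2 <= d)%N ->
  exists C : nat,
  forall (K : closedFieldType) (F : {mpoly K[n.+1]}) (h0 : 'rV[K]_n.+1),
    F \is d.-homog -> irreducible_elt F ->
    h0 != 0 ->
    (exists p, LambdaX F d p /\ on_hyp h0 p) ->
    exists gs : seq {mpoly K[n.+1]},
      (size gs <= C)%N /\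
      (forall g, g \in gs -> exists e : nat, (e <= C)%N /\ g \is e.-homog) /\
      (forall a : 'rV[K]_n.+1, a != 0 ->
         (SX F d h0 a <-> forall g, g \in gs -> g.@[coords a] = 0)) /\
      (exists a : 'rV[K]_n.+1, a != 0 /\ ~ SX F d h0 a).
Proof.
move=> _; exists n.+1 => K F h0 F_homog _ _ [p0 p0_S].
set S := fun p => LambdaX F d p /\ on_hyp h0 p.
have [V [_ V_S V_span]] := indep_max_basis S.
exists [seq linear_form (row i V) | i <- enum 'I_(indep_max S)]; split.
  by rewrite size_map size_enum_ord; apply: has_indep_leq (indep_max_has_indep S).
split; first by move=> g /mapP [i _ ->]; exists 1%N; rewrite linear_form_homog.
split=> [a _|]; last first.
  have [a [a_neq0 p0_a]] := exists_not_on_hyp p0_S.1.1.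
  by exists a; split=> // /(SX_iff_sub_hyp F_homog) /(_ p0 p0_S).
rewrite (SX_iff_sub_hyp F_homog); split=> [sub_a _ /mapP [i _ ->]|vanish p p_S].
  by rewrite meval_linear_form (sub_a _ (V_S i)) mxE.
have V_a : V *m a^T = 0.
  apply/row_matrixP => i; rewrite row_mul row0 [_ *m _]mx11_scalar -meval_linear_form.
  by rewrite vanish ?raddf0 //; apply/mapP; exists i; rewrite ?mem_enum.
by rewrite /on_hyp -(mulmxKpV (V_span p p_S)) -mulmxA V_a mulmx0.
Qed.
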